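(* For every integer $n\ge 2$ there exists a double-$n$ string with diameter at most $5\lceil n/13\rceil-1$. Consequently $\delta(n)\le 5\lceil n/13\rceil -1$ for all $n\ge 2$, and $\limsup_{n\to\infty}\delta(n)/n\le 5/13$.
   Context: A double-$n$ string is a string of length $2n$ over an alphabet of $n$ symbols in which each symbol appears exactly twice. Positions in the string are numbered $1,\dots,2n$. The distance between two distinct symbols is the minimum, over an occurrence of the first symbol and an occurrence of the second, of the absolute difference of their positions. The diameter of a double-$n$ string ($n\ge 2$) is the maximum of the distance over all pairs of distinct symbols. $\delta(n)$ denotes the minimum diameter over all double-$n$ strings. *)

From HB Require Import structures.
From mathcomp Require Import all_boot all_order all_algebra.
Set Implicit Arguments. Unset Strict Implicit. Unset Printing Implicit Defensive.

(* A string over the alphabet {0,...,n-1} is a seq nat; positions are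
   indexed 0..2n-1 (a shift of the paper's 1..2n, which does not change
   any distance). *)

Definition double_string (n : nat) (s : seq nat) : bool :=
  [&& size s == n.*2, all (fun x => x < n) s
    & all (fun a => count_mem a s == 2) (iota 0 n)].

Definition absdiff (i j : nat) : nat := (i - j) + (j - i).

(* distance between symbols a and b: minimum of |i - j| over positions i
   of a and j of b (default size s is never reached for symbols occurring) *)
Definition sdist (s : seq nat) (a b : nat) : nat :=
  \big[minn/size s]_(i < size s | nth 0 s i == a)
    \big[minn/size s]_(j < size s | nth 0 s j == b) absdiff i j.

Definition diameter (n : nat) (s : seq nat) : nat :=
  \max_(a < n) \max_(b < n | a != b) sdist s a b.

Definition ffun_seq (n : nat) (f : {ffun 'I_(n.*2) -> 'I_n}) : seq nat :=
  [seq val (f i) | i <- enum 'I_(n.*2)].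

(* delta(n): minimum diameter over all double-n strings (every double-n
   string is ffun_seq of some f, and the filter keeps exactly those) *)
Definition delta (n : nat) : nat :=
  \big[minn/n.*2]_(f : {ffun 'I_(n.*2) -> 'I_n} | double_string n (ffun_seq f))
     diameter n (ffun_seq f).

From HB Require Import structures.
From mathcomp Require Import all_boot all_order all_algebra.
From mathcomp Require Import zify ring lra.
Import Order.TTheory GRing.Theory Num.Theory.

Set Implicit Arguments.
Unset Strict Implicit.
Unset Printing Implicit Defensive.

(* The construction starts from an explicit double-13 string sigma13 of length 26
   in which any two symbols have occurrences at distance at most 4.  Inflating
   sigma13 by a factor k (each symbol c becomes the block c*k, ..., c*k+k-1)
   gives a double-13k string in which symbols from blocks c, c' occur within
   4k + (k-1) = 5k - 1 of each other.  With k = ⌈n/13⌉ we then delete every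
   symbol >= n; deleting entries never increases the distance between surviving
   positions, so the result is a double-n string of diameter at most 5k - 1. *)

Lemma bigmin_le (I : finType) (P : pred I) (F : I -> nat) (x : nat) (j0 : I) :
  P j0 -> \big[minn/x]_(i | P i) F i <= F j0.
Proof.
have : j0 \in index_enum I by rewrite mem_index_enum.
elim: (index_enum I) => // i r IH; rewrite inE big_cons => /orP [/eqP <- -> | jr Pj].
  exact: geq_minl.
by case: (P i); rewrite ?geq_min IH ?orbT.
Qed.

Lemma sdist_le (s : seq nat) (a b i j : nat) : i < size s -> j < size s ->
  nth 0 s i = a -> nth 0 s j = b -> sdist s a b <= absdiff i j.
Proof.
move=> hi hj ha hb; rewrite /sdist.
apply: leq_trans (@bigmin_le _ _ _ _ (Ordinal hi) _) _; first by rewrite /= ha.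
by apply: (@bigmin_le _ _ _ _ (Ordinal hj)); rewrite /= hb.
Qed.

Lemma nth_filter_take (P : pred nat) (s : seq nat) (i : nat) :
  i < size s -> P (nth 0 s i) ->
  count P (take i s) < size (filter P s) /\
  nth 0 (filter P s) (count P (take i s)) = nth 0 s i.
Proof.
elim: s i => // x s IH [|i] /= hi hP; first by rewrite hP.
by have [] := IH i hi hP; case: (P x); rewrite /= ?add1n.
Qed.

Lemma absdiff_count_take (P : pred nat) (s : seq nat) (i j : nat) :
  absdiff (count P (take i s)) (count P (take j s)) <= absdiff i j.
Proof.
wlog ij : i j / i <= j.
  move=> H; case: (leqP i j) => [|/ltnW] h; first exact: H.
  by rewrite /absdiff addnC [X in _ <= X]addnC H.
rewrite -(subnKC ij) takeD count_cat.
have := count_size P (take (j - i) (drop i s)); rewrite size_take_min /absdiff; lia.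
Qed.

Lemma sdist_filter (P : pred nat) (s : seq nat) (i j : nat) :
  i < size s -> j < size s -> P (nth 0 s i) -> P (nth 0 s j) ->
  sdist (filter P s) (nth 0 s i) (nth 0 s j) <= absdiff i j.
Proof.
move=> hi hj Pi Pj.
have [hi' ei] := nth_filter_take hi Pi; have [hj' ej] := nth_filter_take hj Pj.
exact: leq_trans (sdist_le hi' hj' ei ej) (absdiff_count_take _ _ _ _).
Qed.

Lemma count_ltn_sum (n : nat) (t : seq nat) :
  count (fun x => x < n) t = \sum_(a < n) count_mem (a : nat) t.
Proof.
elim: n => [|n IH]; first by rewrite big_ord0 (@eq_count _ _ pred0) ?count_pred0.
rewrite big_ord_recr /= -IH -count_predUI.
rewrite (@eq_count _ (predI _ _) pred0) ?count_pred0 ?addn0; last first.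
  by move=> x /=; case: ltngtP.
by apply: eq_count => x /=; rewrite ltnS leq_eqVlt orbC.
Qed.

Lemma double_string_filter (n : nat) (t : seq nat) :
  (forall a, a < n -> count_mem a t = 2) ->
  double_string n (filter (fun x => x < n) t).
Proof.
move=> twice; apply/and3P; split.
- rewrite size_filter count_ltn_sum (eq_bigr (fun _ => 2)) => [|a _]; last exact: twice.
  by rewrite sum_nat_const card_ord muln2.
- exact: filter_all.
- apply/allP => a; rewrite mem_iota add0n /= => an.
  rewrite count_filter (@eq_count _ _ (pred1 a)) ?twice // => x /=.
  by case: eqP => // ->; rewrite an.
Qed.

Section Inflation.

Variable k : nat.
Hypothesis k_gt0 : 0 < k.

Definition block (c : nat) : seq nat := mkseq (fun j => c * k + j) k.
Definition inflate (s : seq nat) : seq nat := flatten [seq block c | c <- s].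

Lemma size_inflate (s : seq nat) : size (inflate s) = size s * k.
Proof.
by elim: s => //= c s IH; rewrite /inflate /= size_cat size_mkseq -/(inflate s) IH mulSn.
Qed.

Lemma count_inflate (s : seq nat) (a : nat) :
  count_mem a (inflate s) = count_mem (a %/ k) s.
Proof.
have count_block c : count_mem a (block c) = (a %/ k == c).
  rewrite count_uniq_mem; last by apply: mkseq_uniq => x y /addnI.
  congr (nat_of_bool _); apply/mapP/eqP => [[j] | <-].
    rewrite mem_iota add0n => /andP [_ jk] ->.
    by rewrite divnMDl // divn_small ?addn0.
  by exists (a %% k); rewrite ?mem_iota ?ltn_pmod // -divn_eq.
by elim: s => //= c s IH; rewrite /inflate /= count_cat -/(inflate s) IH count_block eq_sym.
Qed.

Lemma nth_inflate (s : seq nat) (B j : nat) : B < size s -> j < k ->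
  nth 0 (inflate s) (B * k + j) = nth 0 s B * k + j.
Proof.
move=> + jk; elim: s B => // c s IH [|B] /= hB.
  by rewrite /inflate /= nth_cat size_mkseq jk nth_mkseq.
rewrite /inflate /= nth_cat size_mkseq -/(inflate s).
by rewrite mulSn -addnA ltnNge leq_addr /= addKn IH.
Qed.

Lemma inflate_close (s : seq nat) (a b B B' : nat) : B < size s -> B' < size s ->
  nth 0 s B = a %/ k -> nth 0 s B' = b %/ k ->
  let i := B * k + a %% k in let j := B' * k + b %% k in
  [/\ i < size (inflate s), j < size (inflate s),
      nth 0 (inflate s) i = a, nth 0 (inflate s) j = b
    & absdiff i j <= (absdiff B B').+1 * k - 1].
Proof.
move=> hB hB' eB eB' i j.
have ra := ltn_pmod a k_gt0; have rb := ltn_pmod b k_gt0.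
have block_lt C r : C < size s -> r < k -> C * k + r < size (inflate s).
  by move=> hC hr; rewrite size_inflate (leq_trans (n := C.+1 * k)) ?leq_mul2r ?hC ?orbT // mulSn; lia.
split; rewrite ?block_lt ?nth_inflate ?eB ?eB' -?divn_eq //.
set e := absdiff B B'.
have [le_BB' le_B'B] : B * k <= B' * k + e * k /\ B' * k <= B * k + e * k.
  by rewrite -!mulnDl !leq_mul2r /e /absdiff; lia.
rewrite /i /j /absdiff mulSn; lia.
Qed.

End Inflation.

Definition close_pairs (m d : nat) (s : seq nat) : bool :=
  all (fun c => all (fun c' =>
    has (fun B => has (fun B' =>
      [&& nth 0 s B == c, nth 0 s B' == c' & absdiff B B' <= d])
      (iota 0 (size s))) (iota 0 (size s)))
    (iota 0 m)) (iota 0 m).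

Section InflateFilter.

Variables (m d k n : nat) (s : seq nat).
Hypotheses (k_gt0 : 0 < k) (n_le : n <= m * k).

Definition truncated_inflation : seq nat := filter (fun x => x < n) (inflate k s).

Lemma label_lt (a : nat) : a < n -> a %/ k < m.
Proof. by move=> an; rewrite ltn_divLR // (leq_trans an) // mulnC. Qed.

Lemma truncated_inflation_double : double_string m s ->
  double_string n truncated_inflation.
Proof.
case/and3P=> _ _ /allP twice; apply: double_string_filter => a an.
by rewrite count_inflate //; apply/eqP/twice; rewrite mem_iota add0n label_lt.
Qed.

(* Inflation turns the distance bound d into (d + 1) * k - 1, and truncation
   does not increase distances. *)
Lemma truncated_inflation_diameter : close_pairs m d s ->
  diameter n truncated_inflation <= d.+1 * k - 1.
Proof.
move=> /allP close; apply/bigmax_leqP => a _; apply/bigmax_leqP => b _.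
have mem_m x : x < n -> x %/ k \in iota 0 m by rewrite mem_iota add0n => /label_lt.
have /hasP [B] := allP (close _ (mem_m _ (ltn_ord a))) _ (mem_m _ (ltn_ord b)).
rewrite mem_iota add0n => hB /hasP [B']; rewrite mem_iota add0n => hB'.
case/and3P=> /eqP eB /eqP eB' dB.
have [hi hj ea eb dij] := inflate_close k_gt0 hB hB' eB eB'.
rewrite /truncated_inflation -[X in sdist _ X]ea -[X in sdist _ _ X]eb.
apply: leq_trans (sdist_filter hi hj _ _) _; rewrite ?ea ?eb //.
by apply: leq_trans dij _; rewrite leq_sub2r // leq_mul2r ltnS dB orbT.
Qed.

End InflateFilter.

Lemma ceil_div_facts (m n : nat) : 0 < m -> 0 < n ->
  0 < (n + m.-1) %/ m /\ n <= m * ((n + m.-1) %/ m).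
Proof.
move=> m_gt0 n_gt0; have := divn_eq (n + m.-1) m; have := ltn_pmod (n + m.-1) m_gt0.
case: m m_gt0 => // m _ /=; set q := _ %/ _; set r := _ %% _; nia.
Qed.

Definition sigma13 : seq nat :=
  [:: 9; 12; 1; 11; 6; 4; 8; 3; 7; 10; 9; 0; 4; 2; 5; 6; 11; 8; 10; 0; 7; 12; 1; 5; 2; 3].

Lemma sigma13_double : double_string 13 sigma13.
Proof. by vm_compute. Qed.

Lemma sigma13_close : close_pairs 13 4 sigma13.
Proof. by vm_compute. Qed.

Lemma delta_le (n : nat) (s : seq nat) : 0 < n -> double_string n s ->
  delta n <= diameter n s.
Proof.
case: n => // n _ hs; move: (hs) => /and3P [/eqP size_s /allP lt_s _].
pose f : {ffun 'I_(n.+1).*2 -> 'I_n.+1} := [ffun i : 'I_(n.+1).*2 => inord (nth 0 s i)].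
have f_s : ffun_seq f = s.
  rewrite /ffun_seq -[RHS](mkseq_nth 0) size_s /mkseq -val_enum_ord -map_comp.
  apply: eq_map => i /=; rewrite ffunE inordK //.
  by apply: lt_s; rewrite mem_nth // size_s.
by rewrite -f_s in hs *; apply: bigmin_le.
Qed.

Lemma limsup_ratio_le (f : nat -> nat) (a b c : nat) : 0 < c ->
  (forall n, 2 <= n -> c * f n <= a * n + b) ->
  forall eps : rat, (0 < eps)%R -> exists N : nat, forall n : nat, N <= n ->
    ((f n)%:R / n%:R <= a%:R / c%:R + eps :> rat)%R.
Proof.
move=> c_gt0 f_le eps eps_gt0.
exists (maxn 2 (Num.truncn (b%:R / (c%:R * eps) : rat)).+1) => n.
rewrite geq_max => /andP [n2 nN].
have n_gt0 : (0 < n%:R :> rat)%R by rewrite ltr0n; lia.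
have c_gt0' : (0 < c%:R :> rat)%R by rewrite ltr0n.
have b_lt : (b%:R < n%:R * (c%:R * eps) :> rat)%R.
  rewrite -ltr_pdivrMr ?mulr_gt0 //.
  by apply: (lt_le_trans (real_truncnS_gt _)); rewrite ?num_real ?ler_nat.
have := f_le n n2; rewrite -(ler_nat rat) natrD !natrM => cf_le.
rewrite ler_pdivrMr // -(ler_pM2l c_gt0').
have -> : (c%:R * ((a%:R / c%:R + eps) * n%:R) = a%:R * n%:R + n%:R * (c%:R * eps) :> rat)%R.
  by field; rewrite pnatr_eq0 -lt0n.
lra.
Qed.

Theorem theorem3p7 :
  (forall n : nat, 2 <= n ->
     exists s : seq nat, double_string n s /\
       diameter n s <= 5 * ((n + 12) %/ 13) - 1) /\
  (forall n : nat, 2 <= n -> delta n <= 5 * ((n + 12) %/ 13) - 1) /\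
  (forall eps : rat, (0 < eps)%R ->
     exists N : nat, forall n : nat, N <= n ->
       ((delta n)%:R / n%:R <= 5%:R / 13%:R + eps :> rat)%R).
Proof.
have witness n : 2 <= n ->
    let s := truncated_inflation ((n + 12) %/ 13) n sigma13 in
    double_string n s /\ diameter n s <= 5 * ((n + 12) %/ 13) - 1.
  move=> n2 s; have [k_gt0 n_le] := @ceil_div_facts 13 n isT (ltnW n2).
  split; first exact: truncated_inflation_double sigma13_double.
  exact: truncated_inflation_diameter sigma13_close.
have delta_bound n : 2 <= n -> delta n <= 5 * ((n + 12) %/ 13) - 1.
  move=> n2; have [s_double s_diam] := witness n n2.
  exact: leq_trans (delta_le (ltnW n2) s_double) s_diam.
split; first by move=> n /witness []; eexists; split; eassumption.
split; first exact: delta_bound.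
apply: (@limsup_ratio_le _ 5 60 13) => // n n2.
by have := delta_bound n n2; have := leq_divM (n + 12) 13; lia.
Qed.
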